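(* Let $\mathcal{G}$ be a GBS graph of groups, $w=a_0^{k_0}y_1a_1^{k_1}\cdots y_na_n^{k_n}$ a $\mathcal{G}$-factorization, and $0\le i\le j\le n$. Then $w_{i,j}=a_i^{k_i}y_{i+1}a_{i+1}^{k_{i+1}}\cdots y_ja_j^{k_j}$ represents an element of $\langle a_i\rangle\le F(\mathcal{G})$ if and only if $w_{i,j}=a_i^{k_{i,j}}$ in $F(\mathcal{G})$, where $$k_{i,j}=\sum_{\nu=i}^{j}k_\nu\cdot\prod_{\mu=i+1}^{\nu}\frac{\alpha_\mu}{\beta_\mu}\in\mathbb{Q},\qquad \alpha_\mu=\alpha_{y_\mu},\ \beta_\mu=\beta_{y_\mu}.$$
   Context: $\mathcal{G}$ consists of a finite connected graph $Y$ (vertices $V(Y)$, edges $E(Y)$, maps $\iota,\tau:E(Y)\to V(Y)$, fixed-point-free involution $y\mapsto\bar y$ with $\iota(\bar y)=\tau(y)$) and integers $\alpha_y,\beta_y\in\mathbb{Z}\setminus\{0\}$ with $\alpha_y=\beta_{\bar y}$. $F(\mathcal{G})$ is the group with generators $V(Y)\cup E(Y)$ and relations $\bar yy=1$, $y\,b^{\beta_y}\bar y=a^{\alpha_y}$ for each $y\in E(Y)$ with $a=\iota(y)$, $b=\tau(y)$. A $\mathcal{G}$-factorization is a word $a_0^{k_0}y_1a_1^{k_1}\cdots y_na_n^{k_n}$ with $y_i\in E(Y)$, $a_i\in V(Y)$, $k_i\in\mathbb{Z}$, $\iota(y_i)=a_{i-1}$, $\tau(y_i)=a_i$ and $a_n=a_0$.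 The statement $w_{i,j}=a_i^{k_{i,j}}$ includes that $k_{i,j}$ is an integer. *)

From HB Require Import structures.
From mathcomp Require Import all_boot all_order all_algebra.
Set Implicit Arguments. Unset Strict Implicit. Unset Printing Implicit Defensive.
Import Order.TTheory GRing.Theory Num.Theory.
Local Open Scope ring_scope.

Record GBS := {
  Vt : finType;
  Ed : finType;
  iota : Ed -> Vt;
  tau : Ed -> Vt;
  ebar : Ed -> Ed;
  alpha : Ed -> int;
  beta : Ed -> int;
  ebarK : forall y, ebar (ebar y) = y;
  ebar_neq : forall y, ebar y != y;
  iota_bar : forall y, iota (ebar y) = tau y;
  alpha_neq0 : forall y, alpha y != 0;
  beta_neq0 : forall y, beta y != 0;
  alpha_bar : forall y, alpha y = beta (ebar y);
  Y_connected : forall u v : Vt,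
      connect [rel a b | [exists y, (iota y == a) && (tau y == b)]] u v
}.

Definition gen (G : GBS) : Type := (Vt G + Ed G)%type.

(* Words in the generators and their inverses: (x, true) = x, (x, false) = x^-1. *)
Definition word (G : GBS) := seq (gen G * bool).

Definition letter_inv (G : GBS) (l : gen G * bool) : gen G * bool := (l.1, ~~ l.2).
Definition word_inv (G : GBS) (w : word G) : word G := rev (map (@letter_inv G) w).

Definition gpow (G : GBS) (x : gen G) (m : int) : word G :=
  match m with
  | Posz n => nseq n (x, true)
  | Negz n => nseq n.+1 (x, false)
  end.

Definition vpow (G : GBS) (a : Vt G) (m : int) : word G := gpow (inl a) m.
Definition eletter (G : GBS) (y : Ed G) : word G := [:: (inr y, true)].

Inductive relator (G : GBS) : word G -> Prop :=
  | rel_inv (y : Ed G) : relator (eletter (ebar y) ++ eletter y)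
  | rel_conj (y : Ed G) :
      relator (eletter y ++ vpow (tau y) (beta y) ++ eletter (ebar y)
               ++ vpow (iota y) (- alpha y)).

(* Equality in F(G) = <gens | relators>: the congruence generated by
   free reduction and by deletion of relators. *)
Inductive eqF (G : GBS) : word G -> word G -> Prop :=
  | eqF_refl w : eqF w w
  | eqF_sym u v : eqF u v -> eqF v u
  | eqF_trans u v w : eqF u v -> eqF v w -> eqF u w
  | eqF_free u v (l : gen G * bool) :
      eqF (u ++ [:: l; letter_inv l] ++ v) (u ++ v)
  | eqF_rel u v r : relator r -> eqF (u ++ r ++ v) (u ++ v).

(* A G-factorization a_0^{k_0} y_1 a_1^{k_1} ... y_n a_n^{k_n}
   (indices of a, k in 0..n, of y in 1..n). *)
Definition factorization (G : GBS) (n : nat) (a : nat -> Vt G)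
    (y : nat -> Ed G) (k : nat -> int) : Prop :=
  (forall l, (1 <= l <= n)%N -> iota (y l) = a l.-1 /\ tau (y l) = a l)
  /\ a n = a 0%N.

Definition subword (G : GBS) (a : nat -> Vt G) (y : nat -> Ed G)
    (k : nat -> int) (i j : nat) : word G :=
  vpow (a i) (k i) ++
  flatten [seq eletter (y l) ++ vpow (a l) (k l) | l <- index_iota i.+1 j.+1].

Definition kij (G : GBS) (y : nat -> Ed G) (k : nat -> int) (i j : nat) : rat :=
  \sum_(i <= nu < j.+1)
     ((k nu)%:~R * \prod_(i.+1 <= mu < nu.+1)
                     ((alpha (y mu))%:~R / (beta (y mu))%:~R)).

(* Map F(G) to the affine group of Q, encoding x |-> s x + t as the pair (s, t):
   a vertex generator acts as the translation by 1 and an edge y as the scaling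
   by alpha_y / beta_y.  Both defining relators act trivially, so equal words
   have equal images.  The image of a^m is the translation by m, while the image
   of w_{i,j} translates by k_{i,j}; hence w_{i,j} = a_i^m forces m = k_{i,j}. *)
From mathcomp Require Import all_boot all_order all_algebra.
From mathcomp Require Import ring.
Set Implicit Arguments.
Unset Strict Implicit.
Import GRing.Theory Num.Theory.
Local Open Scope ring_scope.

Section AffineMonoid.
Variable R : comPzRingType.

Definition aff_mul (f g : R * R) : R * R := (f.1 * g.1, f.1 * g.2 + f.2).

Lemma aff_mul1l f : aff_mul (1, 0) f = f.
Proof. by case: f => s t; rewrite /aff_mul /=; congr pair; ring. Qed.

Lemma aff_mulA f g h : aff_mul f (aff_mul g h) = aff_mul (aff_mul f g) h.
Proof.
by case: f g h => [? ?] [? ?] [? ?]; rewrite /aff_mul /=; congr pair; ring.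
Qed.

End AffineMonoid.

Section AffineImage.
Variable G : GBS.

Definition edge_ratio (e : Ed G) : rat := (alpha e)%:~R / (beta e)%:~R.

Lemma edge_ratio_neq0 e : edge_ratio e != 0.
Proof. by rewrite mulf_neq0 ?invr_eq0 ?intr_eq0 ?alpha_neq0 ?beta_neq0. Qed.

Lemma edge_ratio_bar e : edge_ratio (ebar e) = (edge_ratio e)^-1.
Proof. by rewrite /edge_ratio -alpha_bar alpha_bar ebarK invf_div. Qed.

Definition aff_letter (l : gen G * bool) : rat * rat :=
  match l with
  | (inl _, true) => (1, 1)
  | (inl _, false) => (1, -1)
  | (inr e, true) => (edge_ratio e, 0)
  | (inr e, false) => ((edge_ratio e)^-1, 0)
  end.

Definition aff_word (w : word G) : rat * rat :=
  foldr (fun l => aff_mul (aff_letter l)) (1, 0) w.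

Lemma aff_word_cat u v : aff_word (u ++ v) = aff_mul (aff_word u) (aff_word v).
Proof. by elim: u => [|l u IH] /=; rewrite ?aff_mul1l // IH aff_mulA. Qed.

Lemma aff_word_letter_inv l : aff_word [:: l; letter_inv l] = (1, 0).
Proof.
case: l => [[x|e] [|]]; rewrite /aff_word /aff_mul /= ?invrK; congr pair;
  by rewrite ?mulr1 ?mulr0 ?addr0 ?subrr ?mulfV ?mulVf ?invr_eq0 ?edge_ratio_neq0.
Qed.

Lemma aff_word_vpow (x : Vt G) (m : int) : aff_word (vpow x m) = (1, m%:~R).
Proof.
rewrite /vpow /gpow; case: m => n; last rewrite NegzE.
  elim: n => [|n IH] //=; move: IH => /= ->.
  by rewrite /aff_mul /= mulr1 mul1r -addn1 PoszD intrD addrC.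
elim: n => [|n IH] /=; first by rewrite /aff_mul /= mulr1 mulr0 add0r.
move: IH => /= ->; rewrite /aff_mul /= mulr1 mul1r.
by rewrite -[n.+2]addn1 PoszD opprD intrD.
Qed.

Lemma aff_word_edge_vpow e x m :
  aff_word (eletter e ++ vpow x m) = (edge_ratio e, edge_ratio e * m%:~R).
Proof.
by rewrite aff_word_cat aff_word_vpow /= /aff_mul /= !mulr1 !mulr0 !addr0.
Qed.

Lemma aff_word_relator r : relator r -> aff_word r = (1, 0).
Proof.
case=> e.
  rewrite /aff_word /aff_mul /= edge_ratio_bar mulr1 mulVf ?edge_ratio_neq0 //.
  by rewrite !mulr0 !addr0.
rewrite catA aff_word_cat aff_word_edge_vpow aff_word_cat aff_word_vpow /=.
rewrite /aff_mul /= edge_ratio_bar !mulr1 !mulr0 !addr0 mulrA.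
rewrite mulfV ?edge_ratio_neq0 // mul1r divfK ?intr_eq0 ?beta_neq0 //.
by rewrite intrN addNr.
Qed.

Lemma eqF_aff_word u v : eqF u v -> aff_word u = aff_word v.
Proof.
elim=> // [u1 v1 w1 _ -> _ -> //|u1 v1 l|u1 v1 r /aff_word_relator Hr].
  by rewrite !aff_word_cat aff_word_letter_inv aff_mul1l.
by rewrite !aff_word_cat Hr aff_mul1l.
Qed.

Variables (a : nat -> Vt G) (y : nat -> Ed G) (k : nat -> int).

Lemma subwordS i j : (i <= j)%N ->
  subword a y k i j.+1 =
  subword a y k i j ++ (eletter (y j.+1) ++ vpow (a j.+1) (k j.+1)).
Proof.
move=> le_ij; rewrite /subword -catA; congr cat.
rewrite /index_iota !subSS subSn // -[(j - i).+1]addn1 iotaD map_cat flatten_cat.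
by rewrite addSn subnKC //= cats0.
Qed.

Lemma subword_diag i : subword a y k i i = vpow (a i) (k i).
Proof. by rewrite /subword /index_iota subnn cats0. Qed.

Lemma kij_diag i : kij y k i i = (k i)%:~R.
Proof. by rewrite /kij big_nat1 big_geq ?mulr1. Qed.

Lemma kijS i j : (i <= j)%N ->
  kij y k i j.+1 =
  kij y k i j + (k j.+1)%:~R * \prod_(i.+1 <= mu < j.+2) edge_ratio (y mu).
Proof. by move=> le_ij; rewrite /kij (big_nat_recr j.+1) // leqW. Qed.

Lemma aff_word_subword i j : (i <= j)%N ->
  aff_word (subword a y k i j) =
  (\prod_(i.+1 <= mu < j.+1) edge_ratio (y mu), kij y k i j).
Proof.
have diag l : aff_word (subword a y k l l) =
    (\prod_(l.+1 <= mu < l.+1) edge_ratio (y mu), kij y k l l).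
  by rewrite subword_diag kij_diag aff_word_vpow big_geq.
elim: j => [|j IH]; first by rewrite leqn0 => /eqP ->.
rewrite leq_eqVlt ltnS => /predU1P[-> //|le_ij].
rewrite subwordS // aff_word_cat IH // aff_word_edge_vpow kijS //.
rewrite /aff_mul /= -big_nat_recr //= addrC; congr (_, _ + _).
by rewrite (big_nat_recr j.+1) //= mulrA mulrC.
Qed.

End AffineImage.

Theorem lemma3p2 (G : GBS) (n : nat) (a : nat -> Vt G) (y : nat -> Ed G)
    (k : nat -> int) (i j : nat) :
  factorization n a y k -> (i <= j)%N -> (j <= n)%N ->
  ((exists m : int, eqF (subword a y k i j) (vpow (a i) m)) <->
   (exists m : int, (m%:~R : rat) = kij y k i j /\
                    eqF (subword a y k i j) (vpow (a i) m))).
Proof.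
move=> _ le_ij _; split=> [[m eq_w]|[m [_ eq_w]]]; exists m => //; split=> //.
have := eqF_aff_word eq_w.
by rewrite aff_word_subword // aff_word_vpow => -[_ ->].
Qed.
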